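(* Let $G=(V,E)$ be a simple undirected graph on $n$ nodes, let $0<\epsilon<\frac13$ and $\delta>0$, and let $D\subseteq V$ be an $\epsilon^3$-near clique with $|D|\ge\delta n$. Let $C=K_{\epsilon^2}(D)\cap D$. Then $|C|\ge(1-\epsilon)|D|-\frac{1}{\epsilon^2}$.
   Context: $\Gamma(v)$ denotes the set of neighbors of $v$. For $Y\subseteq V$ and $0\le\eta\le1$: $K_\eta(Y)=\{v\in V: |\Gamma(v)\cap Y|\ge(1-\eta)|Y|\}$. Each undirected edge $\{u,v\}$ is counted as two directed edges; a set $D\subseteq V$ is a $\gamma$-near clique if $|\{(u,v)\in D\times D:\{u,v\}\in E\}|\ge(1-\gamma)|D|(|D|-1)$. *)

From HB Require Import structures.
From mathcomp Require Import all_boot all_order all_algebra.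
Set Implicit Arguments. Unset Strict Implicit. Unset Printing Implicit Defensive.
Import Order.TTheory GRing.Theory Num.Theory.
Local Open Scope ring_scope.

Definition simple_graph (V : finType) (e : rel V) : Prop :=
  symmetric e /\ irreflexive e.

Definition nbhd (V : finType) (e : rel V) (v : V) : {set V} := [set u | e v u].

Definition Kset (R : realFieldType) (V : finType) (e : rel V) (eta : R)
  (Y : {set V}) : {set V} :=
  [set v | (1 - eta) * #|Y|%:R <= #|nbhd e v :&: Y|%:R].

Definition dir_edges (V : finType) (e : rel V) (D : {set V}) : nat :=
  #|[set p : V * V | (p.1 \in D) && (p.2 \in D) && e p.1 p.2]|.

Definition near_clique (R : realFieldType) (V : finType) (e : rel V)
  (gamma : R) (D : {set V}) : Prop :=
  (1 - gamma) * #|D|%:R * (#|D|%:R - 1) <= (dir_edges e D)%:R.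

From HB Require Import structures.
From mathcomp Require Import all_boot all_order all_algebra.
From mathcomp Require Import ring lra.
Import Order.TTheory GRing.Theory Num.Theory.
Local Open Scope ring_scope.

(* Write d = |D|, K = K_(eps^2)(D), b = |D \ K| and c = |D ∩ K| = d - b.
   Counting the directed edges inside D vertex by vertex, a vertex of D ∩ K
   contributes at most d - 1 and a vertex of D \ K less than (1 - eps^2) d,
   so the near-clique hypothesis gives b (eps^2 d - 1) <= eps^3 d^2.
   If (1 - eps) d <= eps^-2 the claim is trivial; otherwise eps^2 d > 1 and
   b > eps d + eps^-2 would contradict that bound, whence c >= (1 - eps) d - eps^-2. *)

Lemma dir_edges_sum (V : finType) (e : rel V) (D : {set V}) :
  dir_edges e D = (\sum_(v in D) #|nbhd e v :&: D|)%N.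
Proof.
rewrite /dir_edges.
under eq_bigr => v _ do rewrite -sum1_card.
rewrite pair_big_dep /= sum1_card; apply: eq_card => -[u w].
rewrite [in LHS]inE [in RHS]unfold_in /= !inE.
by case: (u \in D); case: (w \in D); case: (e u w).
Qed.

Lemma card_nbhdI_lt (V : finType) (e : rel V) (D : {set V}) (v : V) :
  irreflexive e -> v \in D -> (#|nbhd e v :&: D| < #|D|)%N.
Proof.
move=> irr vD; apply: proper_card; apply/properP; split; last first.
  by exists v; rewrite // !inE irr.
by apply/subsetP => u; rewrite inE => /andP[].
Qed.

Section EdgeCount.

Context {R : realFieldType} {V : finType} {e : rel V}.
Hypothesis irr_e : irreflexive e.

Lemma dir_edges_le_Kset (eta : R) (D : {set V}) :
  (dir_edges e D)%:R <=
    #|D :&: Kset e eta D|%:R * (#|D|%:R - 1)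
    + #|D :\: Kset e eta D|%:R * ((1 - eta) * #|D|%:R) :> R.
Proof.
rewrite dir_edges_sum natr_sum (big_setID (Kset e eta D)) /=.
rewrite !mulr_natl -[_ *+ #|D :&: _|]sumr_const -[_ *+ #|D :\: _|]sumr_const.
apply: lerD; apply: ler_sum => v; rewrite !inE.
- case/andP=> vD _; rewrite lerBrDr -[1]/(1%:R) -natrD ler_nat addn1.
  exact: card_nbhdI_lt.
- by case/andP=> vK _; rewrite ltW // ltNge.
Qed.

Lemma near_clique_card_notin_Kset (gamma eta : R) (D : {set V}) :
  near_clique e gamma D ->
  #|D :\: Kset e eta D|%:R * (eta * #|D|%:R - 1)
    <= gamma * #|D|%:R * (#|D|%:R - 1).
Proof.
rewrite /near_clique => nc; have := dir_edges_le_Kset eta D.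
have -> : #|D :&: Kset e eta D|%:R = #|D|%:R - #|D :\: Kset e eta D|%:R :> R.
  by rewrite -(cardsID (Kset e eta D) D) natrD addrK.
lra.
Qed.

End EdgeCount.

Lemma complement_ge_of_defect_bound (R : realFieldType) (eps b c : R) :
  0 < eps -> 0 <= b -> 0 <= c ->
  b * (eps ^+ 2 * (b + c) - 1) <= eps ^+ 3 * (b + c) ^+ 2 ->
  (1 - eps) * (b + c) - (eps ^+ 2)^-1 <= c.
Proof.
move=> eps_gt0 b_ge0 c_ge0 hb; set x := b + c in hb *; set m := (eps ^+ 2)^-1.
have epsm : eps ^+ 2 * m = 1 by rewrite mulfV // expf_neq0 // lt0r_neq0.
have m_gt0 : 0 < m by rewrite invr_gt0 exprn_gt0.
have [|big_x] := lerP ((1 - eps) * x) m; first lra.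
suff : b <= eps * x + m by rewrite /x; lra.
have kx_gt1 : 1 < eps ^+ 2 * x.
  have : eps ^+ 2 * m < eps ^+ 2 * ((1 - eps) * x) by rewrite ltr_pM2l ?exprn_gt0.
  have : 0 <= eps ^+ 2 * (eps * x) by rewrite !mulr_ge0 ?exprn_ge0 ?addr_ge0 // ltW.
  rewrite epsm; nra.
rewrite leNgt; apply/negP => hlt.
have : (eps * x + m) * (eps ^+ 2 * x - 1) < b * (eps ^+ 2 * x - 1).
  by rewrite ltr_pM2r // subr_gt0.
have -> : (eps * x + m) * (eps ^+ 2 * x - 1)
          = eps ^+ 3 * x ^+ 2 + ((1 - eps) * x - m).
  by rewrite mulrDl mulrBr mulrBr [m * _]mulrA [m * _]mulrC epsm; ring.
lra.
Qed.

Theorem lemma5p4 (R : realFieldType) (V : finType) (e : rel V)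
  (eps delta : R) (D : {set V}) :
  simple_graph e ->
  0 < eps -> eps < 3^-1 -> 0 < delta ->
  near_clique e (eps ^+ 3) D ->
  delta * #|V|%:R <= #|D|%:R ->
  (1 - eps) * #|D|%:R - (eps ^+ 2)^-1 <= #|Kset e (eps ^+ 2) D :&: D|%:R.
Proof.
move=> [_ irr] eps_gt0 _ _ nc _.
have := near_clique_card_notin_Kset irr _ (eps ^+ 2) _ nc.
rewrite setIC -(cardsID (Kset e (eps ^+ 2) D) D) natrD.
set b := #|D :\: _|%:R; set c := #|D :&: _|%:R; rewrite [c + b]addrC => hb.
apply: complement_ge_of_defect_bound => //; rewrite ?ler0n //.
have x_ge0 : 0 <= b + c by rewrite addr_ge0 ?ler0n.
by apply: le_trans hb _; rewrite -mulrA ler_pM2l ?exprn_gt0 //; nra.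
Qed.
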